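(* Let $\Bbbk$ be an algebraically closed field and let $g(x),h(x)$ be polynomials with nonnegative integer coefficients. Let $A$ be a finite-dimensional associative $\Bbbk$-algebra and $\mathrm{F}$ an exact endofunctor of $A\text{-}\mathrm{mod}$ with $g(\mathrm{F})\cong h(\mathrm{F})$. Let $B$ be a finite-dimensional associative $\Bbbk$-algebra, $C=A\otimes_\Bbbk B$, and $\mathrm{G}=\mathrm{F}\boxtimes\mathrm{ID}_B$. Then: (i) $\mathrm{G}$ is selfadjoint if and only if $\mathrm{F}$ is selfadjoint; (ii) $g(\mathrm{G})\cong h(\mathrm{G})$.
   Context: Module categories consist of finite-dimensional left modules; functors are additive and $\Bbbk$-linear. For a polynomial $p(x)=\sum_j c_jx^j$ with $c_j\in\mathbb{Z}_{\geq0}$, $p(\mathrm{F})$ denotes $\bigoplus_j c_j\mathrm{F}^j$, with $\mathrm{F}^0=\mathrm{ID}$, $\mathrm{F}^j$ the $j$-fold composite, and $c\,\mathrm{H}$ the direct sum of $c$ copies of $\mathrm{H}$. The external tensor product $\mathrm{G}=\mathrm{F}\boxtimes\mathrm{ID}_B$ is the endofunctor of $C\text{-}\mathrm{mod}$ defined as follows: a $C$-module $X$ is viewed as an $A$-module together with an action of $B$ by $A$-endomorphisms $\psi_b$, $b\in B$; then $\mathrm{G}X$ is the $A$-module $\mathrm{F}X$ with $B$ acting by $\mathrm{F}\psi_b$, and $\mathrm{G}$ acts on morphisms as $\mathrm{F}$. A functor is selfadjoint if it is left adjoint to itself. *)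

From HB Require Import structures.
From mathcomp Require Import all_boot all_order all_algebra all_field.
Set Implicit Arguments. Unset Strict Implicit. Unset Printing Implicit Defensive.
Import GRing.Theory.
Local Open Scope ring_scope.

(* Finite-dimensional modules are encoded concretely: a module is a natural
   number [mdim] (the k-dimension) together with matrices [mact t] giving the
   action of "generators" t : T on column vectors k^mdim.  For A-modules,
   T = A; for C = A (x) B modules, T = A + B (the action of a (x) 1 and of
   1 (x) b).  Morphisms X -> Y are matrices 'M_(dim Y, dim X) (acting on
   column vectors) intertwining the actions; composition is *m. *)

Record mdata (K : fieldType) (T : Type) := MData {
  mdim : nat;
  mact : T -> 'M[K]_mdim }.

Definition is_hom (K : fieldType) (T : Type) (X Y : mdata K T)
  (f : 'M[K]_(mdim Y, mdim X)) : Prop :=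
  forall t, f *m mact X t = mact Y t *m f.

Definition is_amod (K : fieldType) (A : falgType K) (X : mdata K A) : Prop :=
  [/\ forall (c : K) (a b : A), mact X (c *: a + b) = c *: mact X a + mact X b,
      mact X 1 = 1%:M
    & forall a b : A, mact X (a * b) = mact X a *m mact X b].

Definition resA (K : fieldType) (A B : Type) (X : mdata K (A + B)) : mdata K A :=
  @MData K A (mdim X) (fun a => mact X (inl a)).
Definition resB (K : fieldType) (A B : Type) (X : mdata K (A + B)) : mdata K B :=
  @MData K B (mdim X) (fun b => mact X (inr b)).

(* X is a module over C = A (x)_k B: an A-module with a commuting action of B
   (i.e. B acting by A-endomorphisms) *)
Definition is_cmod (K : fieldType) (A B : falgType K) (X : mdata K (A + B)) : Prop :=
  [/\ is_amod (resA X), is_amod (resB X)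
    & forall (a : A) (b : B), mact X (inl a) *m mact X (inr b) = mact X (inr b) *m mact X (inl a)].

Record fdata (K : fieldType) (T : Type) := FData {
  fobj : mdata K T -> mdata K T;
  fmap : forall X Y : mdata K T,
     'M[K]_(mdim Y, mdim X) -> 'M[K]_(mdim (fobj Y), mdim (fobj X)) }.
Arguments fmap {K T} f {X Y}.

Section Cat.
Variables (K : fieldType) (T : Type) (P : mdata K T -> Prop).

Definition is_functor (F : fdata K T) : Prop :=
  [/\ forall X, P X -> P (fobj F X),
      forall X Y f, P X -> P Y -> @is_hom K T X Y f -> is_hom (fmap F f),
      forall X, P X -> fmap F (1%:M : 'M_(mdim X)) = 1%:M,
      forall X Y Z (f : 'M_(mdim Y, mdim X)) (g : 'M_(mdim Z, mdim Y)),
        P X -> P Y -> P Z -> is_hom f -> is_hom g ->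
        fmap F (g *m f) = fmap F g *m fmap F f
    & forall X Y (c : K) (f g : 'M_(mdim Y, mdim X)),
        P X -> P Y -> is_hom f -> is_hom g ->
        fmap F (c *: f + g) = c *: fmap F f + fmap F g].

Definition short_exact (X Y Z : mdata K T) (f : 'M[K]_(mdim Y, mdim X))
  (g : 'M[K]_(mdim Z, mdim Y)) : Prop :=
  [/\ is_hom f /\ is_hom g, \rank f = mdim X, \rank g = mdim Z,
      g *m f = 0 & (\rank f + \rank g)%N = mdim Y].

Definition exact_functor (F : fdata K T) : Prop :=
  forall X Y Z f g, P X -> P Y -> P Z -> @short_exact X Y Z f g ->
    short_exact (fmap F f) (fmap F g).

Definition natiso (F1 F2 : fdata K T) : Prop :=
  exists (eta : forall X, 'M[K]_(mdim (fobj F2 X), mdim (fobj F1 X)))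
         (theta : forall X, 'M[K]_(mdim (fobj F1 X), mdim (fobj F2 X))),
    (forall X, P X -> [/\ is_hom (eta X), is_hom (theta X),
                          eta X *m theta X = 1%:M & theta X *m eta X = 1%:M]) /\
    (forall X Y (f : 'M_(mdim Y, mdim X)), P X -> P Y -> is_hom f ->
        eta Y *m fmap F1 f = fmap F2 f *m eta X).

(* F is left adjoint to G: a bijection Hom(F X, Y) ~= Hom(X, G Y), natural
   in X and Y *)
Definition adjoint (F G : fdata K T) : Prop :=
  exists (phi : forall X Y, 'M[K]_(mdim Y, mdim (fobj F X)) ->
                            'M[K]_(mdim (fobj G Y), mdim X))
         (psi : forall X Y, 'M[K]_(mdim (fobj G Y), mdim X) ->
                            'M[K]_(mdim Y, mdim (fobj F X))),
    [/\ forall X Y u, P X -> P Y -> is_hom u ->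
          is_hom (phi X Y u) /\ psi X Y (phi X Y u) = u,
        forall X Y v, P X -> P Y -> is_hom v ->
          is_hom (psi X Y v) /\ phi X Y (psi X Y v) = v
      & forall X' X Y Y' (h : 'M_(mdim X, mdim X')) (u : 'M_(mdim Y, mdim (fobj F X)))
               (g : 'M_(mdim Y', mdim Y)),
          P X' -> P X -> P Y -> P Y' -> is_hom h -> is_hom u -> is_hom g ->
          phi X' Y' (g *m u *m fmap F h) = fmap G g *m phi X Y u *m h].

Definition selfadjoint (F : fdata K T) : Prop := adjoint F F.

End Cat.

Section FunctorOps.
Variables (K : fieldType) (T : Type).

Definition mzero : mdata K T := @MData K T 0 (fun _ => 0).
Definition msum (X Y : mdata K T) : mdata K T :=
  @MData K T (mdim X + mdim Y) (fun t => block_mx (mact X t) 0 0 (mact Y t)).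

Definition fid : fdata K T := @FData K T id (fun X Y f => f).
Definition fzero : fdata K T := @FData K T (fun _ => mzero) (fun X Y f => 0).
Definition fcomp (F G : fdata K T) : fdata K T :=
  @FData K T (fun X => fobj F (fobj G X)) (fun X Y f => fmap F (fmap G f)).
Definition fsum (F G : fdata K T) : fdata K T :=
  @FData K T (fun X => msum (fobj F X) (fobj G X))
             (fun X Y f => block_mx (fmap F f) 0 0 (fmap G f)).

Fixpoint fpow (F : fdata K T) (j : nat) : fdata K T :=
  if j is j'.+1 then fcomp F (fpow F j') else fid.
Fixpoint fcopies (c : nat) (H : fdata K T) : fdata K T :=
  if c is c'.+1 then fsum H (fcopies c' H) else fzero.

(* p(F) = (+)_j c_j F^j, where p = sum_j c_j x^j is given by its coefficient
   list [:: c_0; c_1; ...] of nonnegative integers *)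
Fixpoint fpoly_from (j : nat) (p : seq nat) (F : fdata K T) : fdata K T :=
  if p is c :: p' then fsum (fcopies c (fpow F j)) (fpoly_from j.+1 p' F)
  else fzero.
Definition fpoly (p : seq nat) (F : fdata K T) := fpoly_from 0 p F.

End FunctorOps.

(* G = F |x| ID_B on C-modules: G X is F (X as A-module), with B acting by
   F(psi_b); G acts on morphisms as F *)
Definition fbox (K : fieldType) (A B : Type) (F : fdata K A) : fdata K (A + B) :=
  @FData K (A + B)
    (fun X => @MData K (A + B) (mdim (fobj F (resA X)))
       (fun t => match t with
                 | inl a => mact (fobj F (resA X)) a
                 | inr b => @fmap K A F (resA X) (resA X) (mact X (inr b))
                 end))
    (fun X Y f => @fmap K A F (resA X) (resA Y) f).

(* (ii) On underlying A-modules, p(F |x| ID_B) X is p(F) applied to X viewed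
   as an A-module, with B acting through p(F) of the action maps; these
   identifications are natural, so g(G) ~= g(F) |x| ID_B ~= h(F) |x| ID_B ~= h(G).
   (i) An adjunction F -| F is natural in all A-module maps, in particular in
   the action maps of B, so it restricts to C-module maps and gives G -| G.
   Conversely, over an algebraically closed field B has a module V with
   End_B(V) = k (a nonzero module of minimal dimension).  By Schur's lemma the
   C-module maps M (x) V -> N (x) V are exactly the f (x) 1, and
   G (M (x) V) = F M (x) V, so G -| G on such modules yields F -| F. *)

From mathcomp Require Import all_boot all_order all_algebra all_field.
From HB Require Import structures.
From Stdlib Require Import Classical.
Set Implicit Arguments. Unset Strict Implicit. Unset Printing Implicit Defensive.
Import GRing.Theory.
Local Open Scope ring_scope.

Section MatrixFacts.
Variable K : fieldType.

Lemma block_diag_mul m1 m2 n1 n2 p1 p2 (a : 'M[K]_(m1, n1)) (d : 'M[K]_(m2, n2))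
  (a' : 'M[K]_(n1, p1)) (d' : 'M[K]_(n2, p2)) :
  block_mx a 0 0 d *m block_mx a' 0 0 d' = block_mx (a *m a') 0 0 (d *m d').
Proof. by rewrite mulmx_block !mulmx0 !mul0mx !addr0 add0r. Qed.

Lemma block_diag1 m1 m2 : block_mx (1%:M : 'M[K]_m1) 0 0 (1%:M : 'M[K]_m2) = 1%:M.
Proof. by rewrite -scalar_mx_block. Qed.

Lemma flatmx_eq n (a b : 'M[K]_(0, n)) : a = b.
Proof. by rewrite (flatmx0 a) (flatmx0 b). Qed.

Lemma intertwine_inv n m p q (T : 'M[K]_(n, m)) (S : 'M[K]_(m, n))
  (T' : 'M[K]_(p, q)) (S' : 'M[K]_(q, p)) (x : 'M[K]_(m, q)) (y : 'M[K]_(n, p)) :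
  S *m T = 1%:M -> T' *m S' = 1%:M -> T *m x = y *m T' -> S *m y = x *m S'.
Proof.
move=> ST TS E.
by rewrite -[S *m y]mulmx1 -TS mulmxA -(mulmxA S y) -E mulmxA ST mul1mx.
Qed.

End MatrixFacts.

Definition schurian (K : fieldType) (T : Type) n (rho : T -> 'M[K]_n) : Prop :=
  forall f, (forall t, f *m rho t = rho t *m f) -> exists c, f = c%:M.

(* A pair [io], [pr] with [copy_decomp io pr] identifies k^n with s copies of
   k^m; in these coordinates [ampl w] is w (x) 1 and [coefmx r] is 1 (x) r. *)
Section CopyDecomposition.
Variables (K : fieldType) (s : nat).

Definition copy_decomp n m (io : 'I_s -> 'M[K]_(n, m)) (pr : 'I_s -> 'M[K]_(m, n)) :=
  (\sum_i io i *m pr i = 1%:M) /\ (forall i j, pr i *m io j = if i == j then 1%:M else 0).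

Definition ampl n1 m1 n2 m2 (io : 'I_s -> 'M[K]_(n1, m1)) (pr : 'I_s -> 'M[K]_(m2, n2))
  (w : 'M[K]_(m1, m2)) : 'M[K]_(n1, n2) := \sum_i io i *m w *m pr i.

Definition coefmx n m (io : 'I_s -> 'M[K]_(n, m)) (pr : 'I_s -> 'M[K]_(m, n))
  (r : 'M[K]_s) : 'M[K]_n := \sum_i \sum_j r i j *: (io i *m pr j).

Lemma sum_ifeq n m (F : 'I_s -> 'M[K]_(n, m)) i :
  \sum_j (if j == i then F j else 0) = F i.
Proof. by rewrite -big_mkcond big_pred1_eq. Qed.

Lemma ampl_lin n1 m1 n2 m2 (io : 'I_s -> 'M[K]_(n1, m1)) (pr : 'I_s -> 'M[K]_(m2, n2))
  c w1 w2 : ampl io pr (c *: w1 + w2) = c *: ampl io pr w1 + ampl io pr w2.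
Proof.
rewrite /ampl scaler_sumr -big_split; apply: eq_bigr => i _.
by rewrite mulmxDr mulmxDl -scalemxAr -scalemxAl.
Qed.

Lemma coefmx_lin n m (io : 'I_s -> 'M[K]_(n, m)) (pr : 'I_s -> 'M[K]_(m, n)) c r1 r2 :
  coefmx io pr (c *: r1 + r2) = c *: coefmx io pr r1 + coefmx io pr r2.
Proof.
rewrite /coefmx scaler_sumr -big_split; apply: eq_bigr => i _.
rewrite scaler_sumr -big_split; apply: eq_bigr => j _.
by rewrite !mxE scalerDl scalerA.
Qed.

Section Decomposition.
Variables (n m : nat) (io : 'I_s -> 'M[K]_(n, m)) (pr : 'I_s -> 'M[K]_(m, n)).
Hypothesis D : copy_decomp io pr.

Lemma pr_ampl n2 m2 (pr2 : 'I_s -> 'M[K]_(m2, n2)) (w : 'M[K]_(m, m2)) i :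
  pr i *m ampl io pr2 w = w *m pr2 i.
Proof.
rewrite /ampl mulmx_sumr -[RHS](sum_ifeq (fun j => w *m pr2 j)).
apply: eq_bigr => j _; rewrite !mulmxA D.2 eq_sym.
by case: eqP => _; rewrite ?mul1mx ?mul0mx.
Qed.

Lemma ampl_io n2 m2 (io2 : 'I_s -> 'M[K]_(n2, m2)) (w : 'M[K]_(m2, m)) j :
  ampl io2 pr w *m io j = io2 j *m w.
Proof.
rewrite /ampl mulmx_suml -[RHS](sum_ifeq (fun i => io2 i *m w)).
apply: eq_bigr => i _; rewrite -!mulmxA D.2.
by case: eqP => _; rewrite ?mulmx1 ?mulmx0.
Qed.

Lemma ampl_mul n1 m1 n2 m2 (io1 : 'I_s -> 'M[K]_(n1, m1)) (pr2 : 'I_s -> 'M[K]_(m2, n2))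
  (w : 'M[K]_(m1, m)) (v : 'M[K]_(m, m2)) :
  ampl io1 pr w *m ampl io pr2 v = ampl io1 pr2 (w *m v).
Proof.
rewrite /ampl mulmx_suml; apply: eq_bigr => i _.
by rewrite -!mulmxA pr_ampl.
Qed.

Lemma ampl1 : ampl io pr 1%:M = 1%:M.
Proof. by rewrite -D.1; apply: eq_bigr => i _; rewrite mulmx1. Qed.

Lemma pr_coefmx r i : pr i *m coefmx io pr r = \sum_j r i j *: pr j.
Proof.
rewrite /coefmx mulmx_sumr -[RHS](sum_ifeq (fun k => \sum_j r k j *: pr j)).
apply: eq_bigr => k _; rewrite mulmx_sumr; case: (eqVneq k i) => [->|ne] /=.
  by apply: eq_bigr => j _; rewrite -scalemxAr mulmxA D.2 eqxx mul1mx.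
by rewrite big1 // => j _; rewrite -scalemxAr mulmxA D.2 eq_sym (negPf ne) mul0mx scaler0.
Qed.

Lemma coefmx_io r j : coefmx io pr r *m io j = \sum_i r i j *: io i.
Proof.
rewrite /coefmx mulmx_suml; apply: eq_bigr => i _.
rewrite mulmx_suml -[RHS](sum_ifeq (fun k => r i k *: io i)).
apply: eq_bigr => k _; rewrite -scalemxAl -mulmxA D.2.
by case: eqP => [->|_]; rewrite ?mulmx1 ?mulmx0 ?scaler0.
Qed.

Lemma coefmx_mul r1 r2 : coefmx io pr r1 *m coefmx io pr r2 = coefmx io pr (r1 *m r2).
Proof.
rewrite {1}/coefmx mulmx_suml /coefmx; apply: eq_bigr => i _.
rewrite mulmx_suml (eq_bigr (fun j => \sum_k r1 i j *: (r2 j k *: (io i *m pr k)))).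
  rewrite exchange_big /=; apply: eq_bigr => k _; rewrite mxE scaler_suml.
  by apply: eq_bigr => j _; rewrite scalerA.
move=> j _; rewrite -scalemxAl -mulmxA pr_coefmx mulmx_sumr scaler_sumr.
by apply: eq_bigr => k _; rewrite -scalemxAr.
Qed.

Lemma coefmx1 : coefmx io pr 1%:M = 1%:M.
Proof.
rewrite -D.1 /coefmx; apply: eq_bigr => i _.
rewrite -(sum_ifeq (fun j => io j *m pr j)); apply: eq_bigr => j _.
by rewrite mxE eq_sym; case: eqP => [->|_]; rewrite ?scale1r ?scale0r.
Qed.

Lemma eq_ampl n' m' (io' : 'I_s -> 'M[K]_(n', m')) (T : 'M[K]_(n', n)) (S : 'M[K]_(m', m)) :
  (forall i, T *m io i = io' i *m S) -> T = ampl io' pr S.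
Proof.
move=> H; rewrite -[T]mulmx1 -D.1 mulmx_sumr /ampl; apply: eq_bigr => i _.
by rewrite mulmxA H.
Qed.

End Decomposition.

Section TwoDecompositions.
Variables (nY mY : nat) (ioY : 'I_s -> 'M[K]_(nY, mY)) (prY : 'I_s -> 'M[K]_(mY, nY)).
Variables (nX mX : nat) (ioX : 'I_s -> 'M[K]_(nX, mX)) (prX : 'I_s -> 'M[K]_(mX, nX)).
Hypotheses (DY : copy_decomp ioY prY) (DX : copy_decomp ioX prX).

Lemma coefmx_amplC r (w : 'M[K]_(mY, mX)) :
  coefmx ioY prY r *m ampl ioY prX w = ampl ioY prX w *m coefmx ioX prX r.
Proof.
rewrite {1}/coefmx mulmx_suml /ampl mulmx_suml; apply: eq_bigr => i _.
rewrite mulmx_suml -mulmxA pr_coefmx // mulmx_sumr.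
apply: eq_bigr => j _; rewrite -scalemxAl -mulmxA pr_ampl // -scalemxAr.
by rewrite mulmxA.
Qed.

Variables (T : Type) (rho : T -> 'M[K]_s).
Hypothesis rho_schurian : schurian rho.

(* Entrywise, the s x s matrix of blocks (V i j) commutes with every rho t,
   so it is scalar. *)
Lemma schurian_blocks p q (V : 'I_s -> 'I_s -> 'M[K]_(p, q)) (i0 : 'I_s) :
  (forall t i j, \sum_k rho t k j *: V i k = \sum_k rho t i k *: V k j) ->
  forall i j, V i j = if i == j then V i0 i0 else 0.
Proof.
move=> HV i j; apply/matrixP => a b.
pose E := \matrix_(i, j) V i j a b.
have [c Ec] : exists c, E = c%:M.
  apply: rho_schurian => t; apply/matrixP => i' j'; rewrite !mxE.
  have := congr1 (fun M : 'M_(p, q) => M a b) (HV t i' j').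
  rewrite !summxE => Eq.
  rewrite (eq_bigr (fun k => (rho t k j' *: V i' k) a b)); last first.
    by move=> k _; rewrite !mxE mulrC.
  by rewrite Eq; apply: eq_bigr => k _; rewrite !mxE.
have EV i' j' : V i' j' a b = c *+ (i' == j').
  by have := congr1 (fun M : 'M_s => M i' j') Ec; rewrite !mxE.
by rewrite EV; case: eqP => _; rewrite ?EV ?eqxx ?mxE ?mulr0n.
Qed.

Lemma schurian_ampl (i0 : 'I_s) (W : 'M[K]_(nY, nX)) :
  (forall t, W *m coefmx ioX prX (rho t) = coefmx ioY prY (rho t) *m W) ->
  W = ampl ioY prX (prY i0 *m W *m ioX i0).
Proof.
move=> HW; pose V i j := prY i *m W *m ioX j.
have HV t i j : \sum_k rho t k j *: V i k = \sum_k rho t i k *: V k j.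
  move: (congr1 (fun M => prY i *m M *m ioX j) (HW t)) => /=.
  rewrite -!mulmxA coefmx_io // [X in _ = X -> _]mulmxA pr_coefmx //.
  rewrite !mulmx_sumr mulmx_suml => E.
  rewrite (eq_bigr (fun k => prY i *m (W *m (rho t k j *: ioX k)))); last first.
    by move=> k _; rewrite /V -!scalemxAr !mulmxA.
  by rewrite E; apply: eq_bigr => k _; rewrite /V -scalemxAl !mulmxA.
rewrite -/(V i0 i0) -[W]mul1mx -[W]mulmx1 -DY.1 -DX.1 mulmx_suml /ampl; apply: eq_bigr => i _.
rewrite !mulmx_sumr -(sum_ifeq (fun j => ioY i *m V i0 i0 *m prX j)).
apply: eq_bigr => j _.
have -> : ioY i *m prY i *m (W *m (ioX j *m prX j)) = ioY i *m V i j *m prX j.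
  by rewrite /V !mulmxA.
rewrite (schurian_blocks i0 HV) eq_sym.
by case: eqP => [->|_] //; rewrite mulmx0 mul0mx.
Qed.

End TwoDecompositions.

Lemma idx_eq m (p q : 'I_m) (i j : 'I_s) :
  (mxvec_index p i == mxvec_index q j) = (p == q) && (i == j).
Proof.
by rewrite /mxvec_index (inj_eq (@cast_ord_inj _ _ _)) (inj_eq enum_rank_inj) xpair_eqE.
Qed.

Definition copy_in m (j : 'I_s) : 'M[K]_(m * s, m) :=
  \matrix_(k, p) ((k == mxvec_index p j)%:R).
Definition copy_out m (j : 'I_s) : 'M[K]_(m, m * s) := (copy_in m j)^T.

Lemma copy_decomp_mxvec m : copy_decomp (@copy_in m) (@copy_out m).
Proof.
split.
- apply/matrixP => k l; rewrite summxE mxE.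
  case/mxvec_indexP: k => p0 j0.
  rewrite (bigD1 j0) //= big1 ?addr0 => [|j nj].
    rewrite mxE (bigD1 p0) //= big1 ?addr0 => [|p np].
      by rewrite !mxE eqxx mul1r eq_sym.
    by rewrite !mxE idx_eq eq_sym (negPf np) mul0r.
  rewrite mxE big1 // => p _.
  by rewrite !mxE idx_eq (eq_sym j0) (negPf nj) andbF mul0r.
- move=> i j; apply/matrixP => p q; rewrite !mxE.
  rewrite (bigD1 (mxvec_index p i)) //= big1 ?addr0 => [|k nk]; last first.
    by rewrite !mxE (negPf nk) mul0r.
  rewrite !mxE eqxx mul1r idx_eq.
  by case: (i == j); rewrite ?andbT ?andbF !mxE.
Qed.

End CopyDecomposition.

Section Homs.
Variables (K : fieldType) (T : Type).
Implicit Types X Y Z : mdata K T.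

Lemma hom_mul X Y Z (f : 'M_(mdim Y, mdim X)) (g : 'M_(mdim Z, mdim Y)) :
  is_hom f -> is_hom g -> is_hom (g *m f).
Proof. by move=> Hf Hg t; rewrite -mulmxA Hf mulmxA Hg mulmxA. Qed.

Lemma hom1 X : is_hom (1%:M : 'M_(mdim X)).
Proof. by move=> t; rewrite mul1mx mulmx1. Qed.

Lemma hom0 X Y : is_hom (0 : 'M_(mdim Y, mdim X)).
Proof. by move=> t; rewrite mul0mx mulmx0. Qed.

Lemma hom_lin X Y c (f g : 'M_(mdim Y, mdim X)) :
  is_hom f -> is_hom g -> is_hom (c *: f + g).
Proof. by move=> Hf Hg t; rewrite mulmxDl mulmxDr -scalemxAl Hf Hg scalemxAr. Qed.

Lemma hom_sum X Y (I : finType) (c : I -> K) (f : I -> 'M_(mdim Y, mdim X)) :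
  (forall i, is_hom (f i)) -> is_hom (\sum_i c i *: f i).
Proof. by move=> Hf; elim/big_rec: _ => [|i x _ Hx]; [exact: hom0 | exact: hom_lin]. Qed.

End Homs.

Section Functors.
Variables (K : fieldType) (T : Type) (P : mdata K T -> Prop).
Implicit Types X Y Z : mdata K T.

Section Functor.
Variable F : fdata K T.
Hypothesis HF : is_functor P F.

Lemma fobjP X : P X -> P (fobj F X).
Proof. by case: HF => H _ _ _ _; apply: H. Qed.

Lemma fmap_hom X Y (f : 'M_(mdim Y, mdim X)) : P X -> P Y -> is_hom f -> is_hom (fmap F f).
Proof. by case: HF => _ H _ _ _; apply: H. Qed.

Lemma fmap1 X : P X -> fmap F (1%:M : 'M_(mdim X)) = 1%:M.
Proof. by case: HF => _ _ H _ _; apply: H. Qed.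

Lemma fmap_mul X Y Z (f : 'M_(mdim Y, mdim X)) (g : 'M_(mdim Z, mdim Y)) :
  P X -> P Y -> P Z -> is_hom f -> is_hom g -> fmap F (g *m f) = fmap F g *m fmap F f.
Proof. by case: HF => _ _ _ H _; apply: H. Qed.

Lemma fmap0 X Y : P X -> P Y -> fmap F (0 : 'M_(mdim Y, mdim X)) = 0.
Proof.
move=> PX PY; case: HF => _ _ _ _ Hl.
have := Hl X Y 1 0 0 PX PY (hom0 _ _) (hom0 _ _).
rewrite !scale1r addr0 => E.
by apply: (addrI (fmap F (0 : 'M_(mdim Y, mdim X)))); rewrite addr0 -E.
Qed.

Lemma fmap_sumZ X Y (I : finType) (c : I -> K) (f : I -> 'M_(mdim Y, mdim X)) :
  P X -> P Y -> (forall i, is_hom (f i)) ->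
  fmap F (\sum_i c i *: f i) = \sum_i c i *: fmap F (f i).
Proof.
move=> PX PY Hf; case: HF => _ _ _ _ Hl.
pose Q (x : 'M_(mdim Y, mdim X)) (y : 'M_(mdim (fobj F Y), mdim (fobj F X))) :=
  is_hom x /\ fmap F x = y.
suff [] : Q (\sum_i c i *: f i) (\sum_i c i *: fmap F (f i)) by [].
apply: (big_rec2 Q); first by split; [exact: hom0 | exact: fmap0].
by move=> i x y _ [Hx <-]; split; [exact: hom_lin | rewrite Hl].
Qed.

Lemma fmap_sum X Y (I : finType) (f : I -> 'M_(mdim Y, mdim X)) :
  P X -> P Y -> (forall i, is_hom (f i)) ->
  fmap F (\sum_i f i) = \sum_i fmap F (f i).
Proof.
move=> PX PY Hf; have := fmap_sumZ (fun _ => 1) PX PY Hf.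
by under eq_bigr => i _ do rewrite scale1r; under [in RHS]eq_bigr => i _ do rewrite scale1r.
Qed.

End Functor.

Lemma is_functor_fid : is_functor P (@fid K T).
Proof. by split. Qed.

Lemma is_functor_fcomp F G : is_functor P F -> is_functor P G -> is_functor P (fcomp F G).
Proof.
move=> HF HG; split=> /=.
- by move=> X PX; apply: (fobjP HF); apply: (fobjP HG).
- move=> X Y f PX PY Hf; apply: (fmap_hom HF);
    by [apply: (fobjP HG) | apply: (fmap_hom HG)].
- by move=> X PX; rewrite (fmap1 HG) // (fmap1 HF) //; apply: (fobjP HG).
- move=> X Y Z f g PX PY PZ Hf Hg.
  rewrite (fmap_mul HG) // (fmap_mul HF) //;
    by [apply: (fobjP HG) | apply: (fmap_hom HG)].
- move=> X Y c f g PX PY Hf Hg; have [_ _ _ _ linG] := HG; have [_ _ _ _ linF] := HF.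
  have PGX := fobjP HG PX; have PGY := fobjP HG PY.
  have HGf := fmap_hom HG PX PY Hf; have HGg := fmap_hom HG PX PY Hg.
  by rewrite linG // linF.
Qed.

Lemma is_functor_fpow F j : is_functor P F -> is_functor P (fpow F j).
Proof.
by move=> HF; elim: j => [|j IH] /=; [exact: is_functor_fid | exact: is_functor_fcomp].
Qed.

Lemma natiso_refl F : natiso P F F.
Proof.
exists (fun X => 1%:M), (fun X => 1%:M); split; last by move=> *; rewrite mulmx1 mul1mx.
by move=> X PX; split; rewrite ?mulmx1 //; exact: hom1.
Qed.

Lemma natiso_sym F1 F2 : natiso P F1 F2 -> natiso P F2 F1.
Proof.
case=> eta [theta [iso nat]]; exists theta, eta; split.
  by move=> X PX; have [? ? ? ?] := iso X PX; split.
move=> X Y f PX PY Hf; have [_ _ e1 _] := iso X PX; have [_ _ _ e2] := iso Y PY.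
exact: (intertwine_inv e2 e1 (nat X Y f PX PY Hf)).
Qed.

Lemma natiso_trans F1 F2 F3 : natiso P F1 F2 -> natiso P F2 F3 -> natiso P F1 F3.
Proof.
case=> e1 [t1 [iso1 nat1]] [e2 [t2 [iso2 nat2]]].
exists (fun X => e2 X *m e1 X), (fun X => t1 X *m t2 X); split.
  move=> X PX; have [h1 k1 a1 b1] := iso1 X PX; have [h2 k2 a2 b2] := iso2 X PX.
  split; [exact: hom_mul | exact: hom_mul | |].
  - by rewrite mulmxA -(mulmxA (e2 X)) a1 mulmx1 a2.
  - by rewrite mulmxA -(mulmxA (t1 X)) b2 mulmx1 b1.
by move=> X Y f PX PY Hf; rewrite -mulmxA nat1 // !mulmxA nat2.
Qed.

Lemma natiso_fsum F1 F2 G1 G2 :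
  natiso P F1 G1 -> natiso P F2 G2 -> natiso P (fsum F1 F2) (fsum G1 G2).
Proof.
case=> e1 [t1 [iso1 nat1]] [e2 [t2 [iso2 nat2]]].
exists (fun X => block_mx (e1 X) 0 0 (e2 X)), (fun X => block_mx (t1 X) 0 0 (t2 X)).
split; last by move=> X Y f PX PY Hf /=; rewrite !block_diag_mul nat1 // nat2.
move=> X PX; have [h1 k1 a1 b1] := iso1 X PX; have [h2 k2 a2 b2] := iso2 X PX.
split=> [t|t||] /=; rewrite !block_diag_mul.
- by rewrite h1 h2.
- by rewrite k1 k2.
- by rewrite a1 a2 block_diag1.
- by rewrite b1 b2 block_diag1.
Qed.

Lemma natiso_fcopies c F1 F2 : natiso P F1 F2 -> natiso P (fcopies c F1) (fcopies c F2).
Proof.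
by move=> H; elim: c => [|c IH] /=; [exact: natiso_refl | exact: natiso_fsum].
Qed.

Lemma natiso_fcomp_l H F1 F2 : is_functor P H -> is_functor P F1 -> is_functor P F2 ->
  natiso P F1 F2 -> natiso P (fcomp H F1) (fcomp H F2).
Proof.
move=> HH HF1 HF2 [eta [theta [iso nat]]].
exists (fun X => fmap H (eta X)), (fun X => fmap H (theta X)); split.
  move=> X PX; have [he ht a b] := iso X PX.
  have P1 := fobjP HF1 PX; have P2 := fobjP HF2 PX.
  split; [exact: (fmap_hom HH) | exact: (fmap_hom HH) | |].
  - by rewrite -(fmap_mul HH) // a (fmap1 HH).
  - by rewrite -(fmap_mul HH) // b (fmap1 HH).
move=> X Y f PX PY Hf /=; have [he _ _ _] := iso X PX; have [he' _ _ _] := iso Y PY.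
have P1X := fobjP HF1 PX; have P1Y := fobjP HF1 PY.
have P2X := fobjP HF2 PX; have P2Y := fobjP HF2 PY.
have HF1f := fmap_hom HF1 PX PY Hf; have HF2f := fmap_hom HF2 PX PY Hf.
by rewrite -!(fmap_mul HH) // nat.
Qed.

End Functors.

Section Fbox.
Variables (K : fieldType) (A B : falgType K).
Notation Pa := (@is_amod K A).
Notation Pc := (@is_cmod K A B).

Lemma cmod_resA (X : mdata K (A + B)) : Pc X -> Pa (resA X).
Proof. by case. Qed.

Lemma actB_hom (X : mdata K (A + B)) b : Pc X ->
  is_hom (X := resA X) (Y := resA X) (mact X (inr b)).
Proof. by case=> _ _ Hc a /=; rewrite Hc. Qed.

Lemma hom_resA (X Y : mdata K (A + B)) f :
  is_hom (X := X) (Y := Y) f -> is_hom (X := resA X) (Y := resA Y) f.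
Proof. by move=> H a; apply: (H (inl a)). Qed.

Section Functor.
Variable F : fdata K A.
Hypothesis HF : is_functor Pa F.

Lemma fbox_cmod (X : mdata K (A + B)) : Pc X -> Pc (fobj (fbox B F) X).
Proof.
move=> PX; have PA := cmod_resA PX; have [_ [linB unitB mulB] _] := PX.
have Hb b := actB_hom b PX.
split=> [||a b /=]; first exact: (fobjP HF PA).
- split=> /= [c a b|| a b].
  + by have /= -> := linB c a b; case: HF => _ _ _ _ ->.
  + by have /= -> := unitB; rewrite (fmap1 HF).
  + by have /= -> := mulB a b; rewrite (fmap_mul HF (Y := resA X)).
- by symmetry; apply: (fmap_hom HF PA PA (Hb b)).
Qed.

Lemma fbox_hom (X Y : mdata K (A + B)) f : Pc X -> Pc Y -> is_hom (X := X) (Y := Y) f ->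
  is_hom (X := fobj (fbox B F) X) (Y := fobj (fbox B F) Y) (fmap (fbox B F) f).
Proof.
move=> PX PY Hf; have PXA := cmod_resA PX; have PYA := cmod_resA PY.
have HfA := hom_resA Hf; have HbX b := actB_hom b PX; have HbY b := actB_hom b PY.
case=> [a|b] /=; first exact: (fmap_hom HF PXA PYA HfA).
by rewrite -!(fmap_mul HF) // (Hf (inr b)).
Qed.

Lemma is_functor_fbox : is_functor Pc (fbox B F).
Proof.
split=> /=.
- exact: fbox_cmod.
- exact: fbox_hom.
- by move=> X PX; rewrite (fmap1 HF) //; apply: cmod_resA.
- move=> X Y Z f g PX PY PZ Hf Hg.
  by rewrite (fmap_mul HF (Y := resA Y)) //; by [apply: cmod_resA | apply: hom_resA].
- move=> X Y c f g PX PY Hf Hg; case: HF => _ _ _ _ -> //;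
    by [apply: cmod_resA | apply: hom_resA].
Qed.

End Functor.

Lemma natiso_fbox F1 F2 : natiso Pa F1 F2 -> natiso Pc (fbox B F1) (fbox B F2).
Proof.
case=> eta [theta [iso nat]].
exists (fun X => eta (resA X)), (fun X => theta (resA X)); split.
  move=> X PX; have PA := cmod_resA PX; have [he ht a b] := iso _ PA.
  have natB b := nat _ _ _ PA PA (actB_hom b PX).
  split=> // -[a'|b'] /=; [exact: he | exact: natB | exact: ht |].
  exact: (intertwine_inv b a (natB b')).
move=> X Y f PX PY Hf.
exact: (nat _ _ _ (cmod_resA PX) (cmod_resA PY) (hom_resA Hf)).
Qed.

Lemma fbox_fid : natiso Pc (@fid K (A + B)) (fbox B (@fid K A)).
Proof.
exists (fun X => 1%:M), (fun X => 1%:M); split; last by move=> *; rewrite mulmx1 mul1mx.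
by move=> X PX; split=> [[a|b]|[a|b]||] /=; rewrite ?mulmx1 ?mul1mx.
Qed.

Lemma fbox_fzero : natiso Pc (@fzero K (A + B)) (fbox B (@fzero K A)).
Proof.
exists (fun X => 0), (fun X => 0).
by split=> [X PX|*]; [split=> [t|t||] |]; apply: flatmx_eq.
Qed.

Lemma fbox_fsum F1 F2 :
  natiso Pc (fsum (fbox B F1) (fbox B F2)) (fbox B (fsum F1 F2)).
Proof.
exists (fun X => 1%:M), (fun X => 1%:M); split; last by move=> *; rewrite mulmx1 mul1mx.
by move=> X PX; split=> [[a|b]|[a|b]||] /=; rewrite ?mulmx1 ?mul1mx.
Qed.

(* [fbox B F2 X] and [fobj F2 (resA X)] carry the same A-action, but are not
   convertible as records; [fmap F1 1] bridges them. *)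
Lemma fbox_fcomp F1 F2 : is_functor Pa F1 -> is_functor Pa F2 ->
  natiso Pc (fcomp (fbox B F1) (fbox B F2)) (fbox B (fcomp F1 F2)).
Proof.
move=> HF1 HF2.
pose bridge (X : mdata K (A + B)) : 'M[K]_(mdim (fobj F2 (resA X))) := 1%:M.
exists (fun X => @fmap K A F1 (resA (fobj (fbox B F2) X)) (fobj F2 (resA X)) (bridge X)).
exists (fun X => @fmap K A F1 (fobj F2 (resA X)) (resA (fobj (fbox B F2) X)) (bridge X)).
have PF2 X : Pc X -> Pa (fobj F2 (resA X)) by move/cmod_resA; apply: (fobjP HF2).
have PF2' X : Pc X -> Pa (resA (fobj (fbox B F2) X)).
  by move=> PX; apply: cmod_resA; apply: (fbox_cmod HF2).
have Hbr X : is_hom (X := resA (fobj (fbox B F2) X)) (Y := fobj F2 (resA X)) (bridge X).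
  exact: hom1.
have Hbr' X : is_hom (X := fobj F2 (resA X)) (Y := resA (fobj (fbox B F2) X)) (bridge X).
  exact: hom1.
split=> [X PX|X Y f PX PY Hf] /=.
  have P1 := PF2 X PX; have P2 := PF2' X PX; have H1 := Hbr X; have H2 := Hbr' X.
  have HbF2 b := fmap_hom HF2 (cmod_resA PX) (cmod_resA PX) (actB_hom b PX).
  split=> [[a|b]|[a|b]||] /=.
  - exact: (fmap_hom HF1 P2 P1 H1).
  - by have Hb := HbF2 b; rewrite -!(fmap_mul HF1) // /bridge mulmx1 mul1mx.
  - exact: (fmap_hom HF1 P1 P2 H2).
  - by have Hb := HbF2 b; rewrite -!(fmap_mul HF1) // /bridge mulmx1 mul1mx.
  - by rewrite -(fmap_mul HF1) // /bridge mulmx1 (fmap1 HF1).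
  - by rewrite -(fmap_mul HF1) // /bridge mulmx1 (fmap1 HF1).
have HF2f := fmap_hom HF2 (cmod_resA PX) (cmod_resA PY) (hom_resA Hf).
have P1 := PF2' X PX; have P2 := PF2 Y PY; have H1 := Hbr X; have H2 := Hbr Y.
by rewrite -!(fmap_mul HF1) // /bridge mulmx1 mul1mx.
Qed.

End Fbox.

Section FboxPoly.
Variables (K : fieldType) (A B : falgType K) (F : fdata K A).
Notation Pa := (@is_amod K A).
Notation Pc := (@is_cmod K A B).
Hypothesis HF : is_functor Pa F.

Lemma fpow_fbox j : natiso Pc (fpow (fbox B F) j) (fbox B (fpow F j)).
Proof.
elim: j => [|j IH] /=; first exact: fbox_fid.
have HFj := is_functor_fpow j HF.
apply: natiso_trans (fbox_fcomp B HF HFj).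
have HG := is_functor_fbox B HF.
by apply: natiso_fcomp_l IH => //; [exact: is_functor_fpow | exact: is_functor_fbox].
Qed.

Lemma fcopies_fbox c H : natiso Pc (fcopies c (fbox B H)) (fbox B (fcopies c H)).
Proof.
elim: c => [|c IH] /=; first exact: fbox_fzero.
exact: natiso_trans (natiso_fsum (natiso_refl _ _) IH) (fbox_fsum _ _ _).
Qed.

Lemma fpoly_fbox p : natiso Pc (fpoly p (fbox B F)) (fbox B (fpoly p F)).
Proof.
rewrite /fpoly; elim: p 0%N => [|c p IH] j /=; first exact: fbox_fzero.
apply: natiso_trans (fbox_fsum _ _ _); apply: natiso_fsum (IH j.+1).
exact: natiso_trans (natiso_fcopies c (fpow_fbox j)) (fcopies_fbox c _).
Qed.

End FboxPoly.

Section Adjunction.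
Variables (K : fieldType) (T : Type) (P : mdata K T -> Prop) (F G : fdata K T).
Hypotheses (HF : is_functor P F) (HG : is_functor P G).
Variable phi : forall X Y, 'M[K]_(mdim Y, mdim (fobj F X)) -> 'M[K]_(mdim (fobj G Y), mdim X).
Variable psi : forall X Y, 'M[K]_(mdim (fobj G Y), mdim X) -> 'M[K]_(mdim Y, mdim (fobj F X)).
Arguments phi : clear implicits.
Arguments psi : clear implicits.
Hypothesis phiK : forall X Y (u : 'M_(mdim Y, mdim (fobj F X))), P X -> P Y -> is_hom u ->
  is_hom (phi X Y u) /\ psi X Y (phi X Y u) = u.
Hypothesis psiK : forall X Y (v : 'M_(mdim (fobj G Y), mdim X)), P X -> P Y -> is_hom v ->
  is_hom (psi X Y v) /\ phi X Y (psi X Y v) = v.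
Hypothesis phi_natural : forall X' X Y Y' (h : 'M_(mdim X, mdim X'))
  (u : 'M_(mdim Y, mdim (fobj F X))) (g : 'M_(mdim Y', mdim Y)),
  P X' -> P X -> P Y -> P Y' -> is_hom h -> is_hom u -> is_hom g ->
  phi X' Y' (g *m u *m fmap F h) = fmap G g *m phi X Y u *m h.

Lemma phi_natural_l X Y Y' u (g : 'M_(mdim Y', mdim Y)) :
  P X -> P Y -> P Y' -> is_hom u -> is_hom g ->
  phi X Y' (g *m u) = fmap G g *m phi X Y u.
Proof.
move=> PX PY PY' Hu Hg; have := phi_natural PX PX PY PY' (hom1 X) Hu Hg.
by rewrite (fmap1 HF) // !mulmx1.
Qed.

Lemma phi_natural_r X' X Y (h : 'M_(mdim X, mdim X')) u :
  P X' -> P X -> P Y -> is_hom h -> is_hom u ->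
  phi X' Y (u *m fmap F h) = phi X Y u *m h.
Proof.
move=> PX' PX PY Hh Hu; have := phi_natural PX' PX PY PY Hh Hu (hom1 Y).
by rewrite (fmap1 HG) // !mul1mx.
Qed.

Lemma psi_natural X' X Y Y' (h : 'M_(mdim X, mdim X')) (v : 'M_(mdim (fobj G Y), mdim X))
  (g : 'M_(mdim Y', mdim Y)) :
  P X' -> P X -> P Y -> P Y' -> is_hom h -> is_hom v -> is_hom g ->
  psi X' Y' (fmap G g *m v *m h) = g *m psi X Y v *m fmap F h.
Proof.
move=> PX' PX PY PY' Hh Hv Hg; have [Hu Ev] := psiK PX PY Hv.
have Hw : is_hom (g *m psi X Y v *m fmap F h).
  exact: hom_mul (fmap_hom HF PX' PX Hh) (hom_mul Hu Hg).
by rewrite -{1}Ev -phi_natural // (phiK PX' PY' Hw).2.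
Qed.

Lemma psi_natural_l X Y Y' v (g : 'M_(mdim Y', mdim Y)) :
  P X -> P Y -> P Y' -> is_hom v -> is_hom g ->
  psi X Y' (fmap G g *m v) = g *m psi X Y v.
Proof.
move=> PX PY PY' Hv Hg; have := psi_natural PX PX PY PY' (hom1 X) Hv Hg.
by rewrite (fmap1 HF) // !mulmx1.
Qed.

Lemma psi_natural_r X' X Y (h : 'M_(mdim X, mdim X')) v :
  P X' -> P X -> P Y -> is_hom h -> is_hom v ->
  psi X' Y (v *m h) = psi X Y v *m fmap F h.
Proof.
move=> PX' PX PY Hh Hv; have := psi_natural PX' PX PY PY Hh Hv (hom1 Y).
by rewrite (fmap1 HG) // !mul1mx.
Qed.

End Adjunction.

Section FboxSelfadjoint.
Variables (K : fieldType) (A B : falgType K) (F : fdata K A).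
Notation Pa := (@is_amod K A).
Notation Pc := (@is_cmod K A B).
Hypothesis HF : is_functor Pa F.

Lemma selfadjoint_fbox : selfadjoint Pa F -> selfadjoint Pc (fbox B F).
Proof.
case=> phi [psi [phiK psiK nat]].
exists (fun X Y u => phi (resA X) (resA Y) u), (fun X Y v => psi (resA X) (resA Y) v).
split=> [X Y u PX PY Hu|X Y v PX PY Hv|X' X Y Y' h u g PX' PX PY PY' Hh Hu Hg].
- have PXA := cmod_resA PX; have PYA := cmod_resA PY.
  have HuA : is_hom (X := fobj F (resA X)) (Y := resA Y) u := hom_resA Hu.
  have [Hp Ep] := phiK _ _ _ PXA PYA HuA; split=> // -[a|b]; first exact: Hp.
  have HbX := actB_hom b PX; have HbY := actB_hom b PY.
  have E1 := phi_natural_r HF nat PXA PXA PYA HbX HuA.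
  have E2 := phi_natural_l HF nat PXA PYA PYA HuA HbY.
  by apply: etrans (esym E1) _; rewrite (Hu (inr b)).
- have PXA := cmod_resA PX; have PYA := cmod_resA PY.
  have HvA : is_hom (X := resA X) (Y := fobj F (resA Y)) v := hom_resA Hv.
  have [Hp Ep] := psiK _ _ _ PXA PYA HvA; split=> // -[a|b]; first exact: Hp.
  have HbX := actB_hom b PX; have HbY := actB_hom b PY.
  have E1 := psi_natural_r HF HF phiK psiK nat PXA PXA PYA HbX HvA.
  have E2 := psi_natural_l HF phiK psiK nat PXA PYA PYA HvA HbY.
  by apply: etrans (esym E1) _; rewrite (Hv (inr b)).
- have HuA : is_hom (X := fobj F (resA X)) (Y := resA Y) u := hom_resA Hu.
  exact: (nat (resA X') (resA X) (resA Y) (resA Y') h u g (cmod_resA PX') (cmod_resA PX)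
    (cmod_resA PY) (cmod_resA PY') (hom_resA Hh) HuA (hom_resA Hg)).
Qed.

End FboxSelfadjoint.

Section FunctorCopies.
Variables (K : fieldType) (T : Type) (P : mdata K T -> Prop) (F : fdata K T) (s : nat).
Hypothesis HF : is_functor P F.

Section OneDecomposition.
Variables (X Y : mdata K T) (io : 'I_s -> 'M[K]_(mdim Y, mdim X))
  (pr : 'I_s -> 'M[K]_(mdim X, mdim Y)).
Hypotheses (PX : P X) (PY : P Y).
Hypotheses (Hio : forall i, is_hom (io i)) (Hpr : forall i, is_hom (pr i)).

Lemma fmap_copy_decomp : copy_decomp io pr ->
  copy_decomp (fun i => fmap F (io i)) (fun i => fmap F (pr i)).
Proof.
move=> [Hsum Hdelta]; split.
  rewrite -(fmap1 HF PY) -Hsum (fmap_sum HF) => [|//|//|i]; last exact: hom_mul.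
  by apply: eq_bigr => i _; rewrite (fmap_mul HF).
move=> i j; rewrite -(fmap_mul HF) // Hdelta.
by case: eqP => _; [exact: (fmap1 HF) | exact: (fmap0 HF)].
Qed.

Lemma fmap_coefmx r :
  fmap F (coefmx io pr r) = coefmx (fun i => fmap F (io i)) (fun i => fmap F (pr i)) r.
Proof.
have Hij i j : is_hom (io i *m pr j) by exact: hom_mul.
rewrite /coefmx (fmap_sum HF) // => [|i]; last exact: hom_sum.
apply: eq_bigr => i _; rewrite (fmap_sumZ HF) //.
by apply: eq_bigr => j _; rewrite (fmap_mul HF).
Qed.

End OneDecomposition.

Lemma fmap_ampl (M N XM XN : mdata K T) (io : 'I_s -> 'M[K]_(mdim XN, mdim N))
  (pr : 'I_s -> 'M[K]_(mdim M, mdim XM)) (w : 'M[K]_(mdim N, mdim M)) :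
  P M -> P N -> P XM -> P XN ->
  (forall i, is_hom (io i)) -> (forall i, is_hom (pr i)) -> is_hom w ->
  fmap F (ampl io pr w) = ampl (fun i => fmap F (io i)) (fun i => fmap F (pr i)) (fmap F w).
Proof.
move=> PM PN PXM PXN Hio Hpr Hw.
have Hwio i : is_hom (io i *m w) by exact: hom_mul.
rewrite /ampl (fmap_sum HF) // => [|i]; last exact: hom_mul.
by apply: eq_bigr => i _; rewrite !(fmap_mul HF).
Qed.

End FunctorCopies.

Section TensorModule.
Variables (K : fieldType) (A B : falgType K) (F : fdata K A).
Notation Pa := (@is_amod K A).
Notation Pc := (@is_cmod K A B).
Hypothesis HF : is_functor Pa F.
Variables (s : nat) (rho : B -> 'M[K]_s).
Hypothesis Hrho : is_amod (@MData K B s rho).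

Definition cin (M : mdata K A) := @copy_in K s (mdim M).
Definition cout (M : mdata K A) := @copy_out K s (mdim M).

(* The C-module M (x) V, for V = k^s with B acting through [rho]. *)
Definition tensor (M : mdata K A) : mdata K (A + B) :=
  @MData K (A + B) (mdim M * s) (fun t => match t with
     | inl a => ampl (cin M) (cout M) (mact M a)
     | inr b => coefmx (cin M) (cout M) (rho b) end).

Lemma copy_decomp_cin M : copy_decomp (cin M) (cout M).
Proof. exact: copy_decomp_mxvec. Qed.

Lemma tensor_cmod M : Pa M -> Pc (tensor M).
Proof.
have DM := copy_decomp_cin M.
case=> linM unitM mulM; have [/= linB unitB mulB] := Hrho; split=> [||a b /=].
- split=> /= [c a b||a b]; first by rewrite linM ampl_lin.
    by rewrite unitM ampl1.
  by rewrite mulM ampl_mul.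
- split=> /= [c a b||a b]; first by rewrite linB coefmx_lin.
    by rewrite unitB coefmx1.
  by rewrite mulB coefmx_mul.
- by rewrite (coefmx_amplC DM DM).
Qed.

Lemma cin_hom M j : is_hom (X := M) (Y := resA (tensor M)) (cin M j).
Proof. by move=> a /=; rewrite ampl_io //; exact: copy_decomp_cin. Qed.

Lemma cout_hom M j : is_hom (X := resA (tensor M)) (Y := M) (cout M j).
Proof. by move=> a /=; rewrite pr_ampl //; exact: copy_decomp_cin. Qed.

Lemma ampl_tensor_hom M N w : is_hom (X := M) (Y := N) w ->
  is_hom (X := tensor M) (Y := tensor N) (ampl (cin N) (cout M) w).
Proof.
have DM := copy_decomp_cin M; have DN := copy_decomp_cin N.
by move=> Hw [a|b] /=; rewrite ?ampl_mul ?Hw // (coefmx_amplC DN DM).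
Qed.

Definition fcin (N : mdata K A) j := @fmap K A F N (resA (tensor N)) (cin N j).
Definition fcout (N : mdata K A) j := @fmap K A F (resA (tensor N)) N (cout N j).

Section Object.
Variable N : mdata K A.
Hypothesis PN : Pa N.

Let PXN : Pa (resA (tensor N)) := cmod_resA (tensor_cmod PN).

Lemma copy_decomp_fcin : copy_decomp (fcin N) (fcout N).
Proof.
exact: (fmap_copy_decomp HF PN PXN (@cin_hom N) (@cout_hom N) (copy_decomp_cin N)).
Qed.

Lemma actA_fobj_tensor a :
  mact (fobj F (resA (tensor N))) a = ampl (fcin N) (fcout N) (mact (fobj F N) a).
Proof.
apply: (eq_ampl copy_decomp_fcin) => i.
by rewrite -(fmap_hom HF PN PXN (cin_hom N i)).
Qed.

Lemma fmap_coefmx_tensor r :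
  @fmap K A F (resA (tensor N)) (resA (tensor N)) (coefmx (cin N) (cout N) r) =
  coefmx (fcin N) (fcout N) r.
Proof. exact: (fmap_coefmx HF PN PXN (@cin_hom N) (@cout_hom N)). Qed.

End Object.

Section Pair.
Variables (M N : mdata K A).
Hypotheses (PM : Pa M) (PN : Pa N).

Lemma fmap_ampl_tensor (w : 'M[K]_(mdim N, mdim M)) : is_hom w ->
  @fmap K A F (resA (tensor M)) (resA (tensor N)) (ampl (cin N) (cout M) w) =
  ampl (fcin N) (fcout M) (fmap F w).
Proof.
apply: (fmap_ampl HF PM PN) (@cin_hom N) (@cout_hom M);
  exact: cmod_resA (tensor_cmod _).
Qed.

Lemma ampl_fbox_hom_l u : is_hom (X := fobj F M) (Y := N) u ->
  is_hom (X := fobj (fbox B F) (tensor M)) (Y := tensor N) (ampl (cin N) (fcout M) u).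
Proof.
have DN := copy_decomp_cin N; have DFM := copy_decomp_fcin PM.
move=> Hu [a|b] /=.
  by rewrite actA_fobj_tensor // (ampl_mul DFM) (ampl_mul DN) Hu.
by rewrite fmap_coefmx_tensor // (coefmx_amplC DN DFM).
Qed.

Lemma ampl_fbox_hom_r v : is_hom (X := M) (Y := fobj F N) v ->
  is_hom (X := tensor M) (Y := fobj (fbox B F) (tensor N)) (ampl (fcin N) (cout M) v).
Proof.
have DM := copy_decomp_cin M; have DFN := copy_decomp_fcin PN.
move=> Hv [a|b] /=.
  by rewrite actA_fobj_tensor // (ampl_mul DM) (ampl_mul DFN) Hv.
by rewrite fmap_coefmx_tensor // (coefmx_amplC DFN DM).
Qed.

Lemma corner_ampl_l i (u : 'M[K]_(mdim N, mdim (fobj F M))) :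
  cout N i *m ampl (cin N) (fcout M) u *m fcin M i = u.
Proof.
by rewrite (pr_ampl (copy_decomp_cin N)) -mulmxA (copy_decomp_fcin PM).2 eqxx mulmx1.
Qed.

Lemma corner_ampl_r i (v : 'M[K]_(mdim (fobj F N), mdim M)) :
  fcout N i *m ampl (fcin N) (cout M) v *m cin M i = v.
Proof.
by rewrite (pr_ampl (copy_decomp_fcin PN)) -mulmxA (copy_decomp_cin M).2 eqxx mulmx1.
Qed.

End Pair.

Hypothesis rho_schurian : schurian rho.
Variable i0 : 'I_s.

Lemma fbox_hom_ampl_l M N Z : Pa M ->
  is_hom (X := fobj (fbox B F) (tensor M)) (Y := tensor N) Z ->
  Z = ampl (cin N) (fcout M) (cout N i0 *m Z *m fcin M i0).
Proof.
move=> PM HZ; apply: (schurian_ampl (copy_decomp_cin N) (copy_decomp_fcin PM) rho_schurian).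
by move=> b; have := HZ (inr b); rewrite /= fmap_coefmx_tensor.
Qed.

Lemma fbox_hom_ampl_r M N W : Pa N ->
  is_hom (X := tensor M) (Y := fobj (fbox B F) (tensor N)) W ->
  W = ampl (fcin N) (cout M) (fcout N i0 *m W *m cin M i0).
Proof.
move=> PN HW; apply: (schurian_ampl (copy_decomp_fcin PN) (copy_decomp_cin M) rho_schurian).
by move=> b; have := HW (inr b); rewrite /= fmap_coefmx_tensor.
Qed.

Lemma selfadjoint_of_fbox : selfadjoint Pc (fbox B F) -> selfadjoint Pa F.
Proof.
case=> phi [psi [phiK psiK nat]].
exists (fun M N u =>
  fcout N i0 *m phi (tensor M) (tensor N) (ampl (cin N) (fcout M) u) *m cin M i0).
exists (fun M N v =>
  cout N i0 *m psi (tensor M) (tensor N) (ampl (fcin N) (cout M) v) *m fcin M i0).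
split=> [M N u PM PN Hu|M N v PM PN Hv|M' M N N' h u g PM' PM PN PN' Hh Hu Hg].
- have PXM := tensor_cmod PM; have PXN := tensor_cmod PN.
  have [Hp Ep] := phiK _ _ _ PXM PXN (ampl_fbox_hom_l PM Hu).
  have HpA : is_hom (X := resA (tensor M)) (Y := fobj F (resA (tensor N)))
    (phi (tensor M) (tensor N) (ampl (cin N) (fcout M) u)) := hom_resA Hp.
  split.
    apply: hom_mul (cin_hom _ _) (hom_mul HpA _).
    exact: (fmap_hom HF (cmod_resA PXN) PN (cout_hom _ _)).
  by rewrite -(fbox_hom_ampl_r PN Hp) Ep corner_ampl_l.
- have PXM := tensor_cmod PM; have PXN := tensor_cmod PN.
  have [Hp Ep] := psiK _ _ _ PXM PXN (ampl_fbox_hom_r PN Hv).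
  have HpA : is_hom (X := fobj F (resA (tensor M))) (Y := resA (tensor N))
    (psi (tensor M) (tensor N) (ampl (fcin N) (cout M) v)) := hom_resA Hp.
  split.
    apply: hom_mul (hom_mul HpA (cout_hom _ _)).
    exact: (fmap_hom HF PM (cmod_resA PXM) (cin_hom _ _)).
  by rewrite -(fbox_hom_ampl_l PM Hp) Ep corner_ampl_r.
- have PXM := tensor_cmod PM; have PXN := tensor_cmod PN.
  have PXM' := tensor_cmod PM'; have PXN' := tensor_cmod PN'.
  have Eu : ampl (cin N') (fcout M') (g *m u *m fmap F h) =
      ampl (cin N') (cout N) g *m ampl (cin N) (fcout M) u *m
      fmap (fbox B F) (X := tensor M') (Y := tensor M) (ampl (cin M) (cout M') h).
    rewrite /= (fmap_ampl_tensor PM' PM Hh) (ampl_mul (copy_decomp_cin N)).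
    by rewrite (ampl_mul (copy_decomp_fcin PM)).
  rewrite Eu (nat _ _ _ _ _ _ _ PXM' PXM PXN PXN' (ampl_tensor_hom Hh)
    (ampl_fbox_hom_l PM Hu) (ampl_tensor_hom Hg)) /= (fmap_ampl_tensor PN PN' Hg).
  rewrite !mulmxA (pr_ampl (copy_decomp_fcin PN')) -!mulmxA (ampl_io (copy_decomp_cin M')).
  by rewrite !mulmxA.
Qed.

End TensorModule.

Section SchurianRepresentation.
Variables (K : fieldType) (B : falgType K).

Definition is_rep n (rho : B -> 'M[K]_n) : Prop := is_amod (@MData K B n rho).

Lemma rep_image n (rho : B -> 'M[K]_n) (g : 'M[K]_n) :
  is_rep rho -> (forall b, g *m rho b = rho b *m g) ->
  exists rho' : B -> 'M[K]_(\rank g), is_rep rho'.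
Proof.
case=> /= Hlin H1 Hmul Hg; set r := \rank g.
pose P : 'M[K]_(n, r) := col_ebase g *m pid_mx r.
pose P' : 'M[K]_(r, n) := pid_mx r *m invmx (col_ebase g).
pose Q : 'M[K]_(r, n) := pid_mx r *m row_ebase g.
pose Q' : 'M[K]_(n, r) := invmx (row_ebase g) *m pid_mx r.
have rn : (r <= n)%N by apply: rank_leq_row.
have PQ : P *m Q = g.
  by rewrite /P /Q mulmxA -(mulmxA (col_ebase g)) mul_pid_mx !minnn mulmx_ebase.
have P'P : P' *m P = 1%:M.
  rewrite /P /P' mulmxA -(mulmxA _ (invmx _)) mulVmx ?col_ebase_unit // mulmx1.
  by rewrite mul_pid_mx minnn (minn_idPr rn) pid_mx_1.
have QQ' : Q *m Q' = 1%:M.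
  rewrite /Q' /Q mulmxA -(mulmxA _ (row_ebase g)) mulmxV ?row_ebase_unit // mulmx1.
  by rewrite mul_pid_mx minnn (minn_idPr rn) pid_mx_1.
clearbody P P' Q Q'.
have rhoP b : rho b *m P = P *m (P' *m rho b *m P).
  have E : rho b *m P = P *m (Q *m rho b *m Q').
    by rewrite !mulmxA PQ Hg -PQ -!mulmxA QQ' mulmx1.
  by rewrite -(mulmxA P') E (mulmxA P') P'P mul1mx.
exists (fun b => P' *m rho b *m P); split => /=.
- by move=> c a b; rewrite Hlin mulmxDr mulmxDl -scalemxAr -scalemxAl.
- by rewrite H1 mulmx1.
- by move=> a b; rewrite Hmul -!mulmxA rhoP (mulmxA P' P) P'P mul1mx.
Qed.

Import VectorInternalTheory.

Definition reg_act (b : B) : 'M[K]_(dim B) := (lin1_mx (fun u => v2r (b * r2v u)))^T.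

Lemma reg_rep : is_rep reg_act.
Proof.
have mulL (c : B) : linear (fun u : 'rV[K]_(dim B) => v2r (c * r2v u)).
  by move=> d x y; rewrite linearP /= mulrDr -scalerAr linearP.
pose L c : {linear 'rV[K]_(dim B) -> 'rV[K]_(dim B)} :=
  HB.pack (fun u => v2r (c * r2v u)) (GRing.isLinear.Build _ _ _ _ _ (mulL c)).
rewrite /reg_act; split => /=.
- move=> c a b; apply/matrixP => i j; rewrite !mxE.
  by rewrite mulrDl -scalerAl linearD linearZ /= !mxE.
- apply/matrixP => i j; rewrite !mxE mul1r r2vK mxE eq_sym.
  by case: (i == j); rewrite ?andbT ?andbF.
- move=> a b; rewrite -trmx_mul; congr (_^T); apply/eqP/mulmxP => u.
  rewrite mulmxA (mul_rV_lin1 (L a)) (mul_rV_lin1 (L b)) (mul_rV_lin1 (L (a * b))) /=.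
  by rewrite v2rK mulrA.
Qed.

Lemma dim_falg_gt0 : (0 < dim B)%N.
Proof.
rewrite lt0n; apply/eqP => d0.
have : v2r (1 : B) = v2r 0.
  by move: (v2r (1 : B)) (v2r (0 : B)); rewrite d0 => u v; rewrite [u]thinmx0 [v]thinmx0.
by move/v2r_inj/eqP; rewrite oner_eq0.
Qed.

End SchurianRepresentation.

Section ClosedField.
Variables (K : closedFieldType) (B : falgType K).

(* An endomorphism f of a non-schurian representation has an eigenvalue c
   with f - c a nonzero singular endomorphism, whose image is a smaller
   nonzero representation. *)
Lemma rep_shrink n (rho : B -> 'M[K]_n.+1) : is_rep rho -> ~ schurian rho ->
  exists r (rho' : B -> 'M[K]_r.+1), (r < n)%N /\ is_rep rho'.
Proof.
move=> Hr Hs.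
have [f [Hf Hnf]] : exists f, (forall b, f *m rho b = rho b *m f) /\ ~ exists c, f = c%:M.
  by apply: NNPP => H; apply: Hs => f Hf; apply: NNPP => Hn; apply: H; exists f.
have [c Hc] : exists c, root (char_poly f) c by apply/closed_rootP; rewrite size_char_poly.
pose g := f - c%:M.
have Hg b : g *m rho b = rho b *m g by rewrite /g mulmxBl mulmxBr Hf scalar_mxC.
have rank_gt0 : (0 < \rank g)%N.
  by rewrite lt0n mxrank_eq0 subr_eq0; apply/eqP => fc; apply: Hnf; exists c.
have rank_lt : (\rank g < n.+1)%N.
  rewrite ltn_neqAle rank_leq_row andbT; apply/negP => /eqP rn.
  have : eigenvalue f c by rewrite eigenvalue_root_char.
  by rewrite /eigenvalue /eigenspace kermx_eq0 /row_free -/g rn eqxx.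
have [rho' Hr'] := rep_image Hr Hg.
move: rho' Hr'; case: (\rank g) rank_gt0 rank_lt => [//|r] _ rlt rho' Hr'.
by exists r, rho'.
Qed.

Lemma exists_schurian_rep :
  exists s (rho : B -> 'M[K]_s.+1), is_rep rho /\ schurian rho.
Proof.
suff from_rep n (rho : B -> 'M[K]_n.+1) : is_rep rho ->
    exists s (rho : B -> 'M[K]_s.+1), is_rep rho /\ schurian rho.
  have := reg_rep B; have := dim_falg_gt0 B.
  by move: (@reg_act K B); case: (dim B) => [//|n] rho _; exact: from_rep.
elim/ltn_ind: n rho => n IH rho Hr.
have [Hs|Hs] := classic (schurian rho); first by exists n, rho.
have [r [rho' [rn Hr']]] := rep_shrink Hr Hs.
exact: IH r rn rho' Hr'.
Qed.

End ClosedField.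

Theorem proposition15 (k : closedFieldType) (A B : falgType k)
  (g h : seq nat) (F : fdata k A) :
  is_functor (@is_amod k A) F ->
  exact_functor (@is_amod k A) F ->
  natiso (@is_amod k A) (fpoly g F) (fpoly h F) ->
  (selfadjoint (@is_cmod k A B) (fbox B F) <-> selfadjoint (@is_amod k A) F) /\
  natiso (@is_cmod k A B) (fpoly g (fbox B F)) (fpoly h (fbox B F)).
Proof.
move=> HF _ Hiso; split.
  split; last exact: selfadjoint_fbox.
  have [s [rho [Hrho Hs]]] := exists_schurian_rep B.
  exact: (selfadjoint_of_fbox HF Hrho Hs ord0).
apply: natiso_trans (fpoly_fbox B HF g) _.
apply: natiso_trans (natiso_fbox B Hiso) _.
exact: natiso_sym (fpoly_fbox B HF h).
Qed.
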